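(* In the setting of the context (with $\alpha\in(1,2]$), for every $n\ge1$, \[\int_\Omega P'(0)1\,d\mu=0\quad\text{and}\quad\int_\Omega (Q(0)^n)'1\,d\mu=\int_\Omega Q(0)^{n-1}Q'(0)1\,d\mu=0,\] where $(Q(0)^n)'$ denotes the derivative of $t\mapsto Q(t)^n$ at $t=0$.
   Context: $T:\Omega\to\Omega$ preserves the probability $\mu$; $v:\Omega\to\mathbb R$ measurable, $\int v^2d\mu=\infty$, $\int_\Omega v\,d\mu=0$; $\alpha\in(1,2]$; $\ell$ slowly varying, $\hat\ell(x)=1+\int_1^{1+x}\ell(u)u^{-1}du$, $\ell_0=\ell$ for $\alpha<2$, $\ell_0=\hat\ell$ for $\alpha=2$. (H1): $\mu(v>x)=p\ell(x)x^{-\alpha}(1+o(1))$, $\mu(v\le-x)=q\ell(x)x^{-\alpha}(1+o(1))$, $p+q=1$. $R$ transfer operator ($\int Rf\,g\,d\mu=\int f\,g\circ T\,d\mu$), $R(t)f=R(e^{itv}f)$ on a Banach space $\mathcal B\subset L^\infty$ containing constants with $|\phi|_\infty\le\|\phi\|$; (H2): there exist $\epsilon_1,C>0$ such that for $|t|,|h|<\epsilon_1$, $\|R(t)\|,\|R'(t)\|\le C$, $\|R(t+h)-R(t)-hR'(0)\|\le C|h|(|t|^{\alpha'-1}+|h|^{\alpha'-1})$ for any $\alpha'\in(1,\alpha)$, $\|R'(t+h)-R'(t)\|\le C|h|^{\alpha-1}\ell_0(1/|h|)$. (H3): $1$ is a simple eigenvalue of $R$ on $\mathcal B$, rest of spectrum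 in a disk of radius $<1$. For small $|t|$, $R(t)=\lambda(t)P(t)+Q(t)$ where $\lambda(t)$ is the continuous family of simple eigenvalues with $\lambda(0)=1$, $P(t)$ the corresponding spectral projection and $Q(t)=R(t)(I-P(t))$; primes denote operator-norm derivatives in $t$. *)

From HB Require Import structures.
From mathcomp Require Import all_boot all_order all_algebra.
From mathcomp Require Import all_classical all_reals all_analysis.
Import Order.TTheory GRing.Theory Num.Theory.
From mathcomp Require Export complex.
Import numFieldNormedType.Exports.

Set Implicit Arguments.
Unset Strict Implicit.
Unset Printing Implicit Defensive.

Local Open Scope ring_scope.
Local Open Scope classical_set_scope.

Definition cabs {R : realType} (z : R[i]) : R := complex.Re `|z|.

Definition cexpi {R : realType} (x : R) : R[i] := (cos x +i* sin x)%C.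

Section CMeasure.
Context {R : realType} {d : measure_display} {T : measurableType d}.
Variable mu : {measure set T -> \bar R}.

Definition cmeasurable (f : T -> R[i]) :=
  measurable_fun setT (fun x => complex.Re (f x)) /\
  measurable_fun setT (fun x => complex.Im (f x)).

Definition cintegrable (f : T -> R[i]) :=
  mu.-integrable setT (fun x => (complex.Re (f x))%:E) /\
  mu.-integrable setT (fun x => (complex.Im (f x))%:E).

Definition cint (f : T -> R[i]) : R[i] :=
  (Rintegral mu setT (fun x => complex.Re (f x)) +i*
   Rintegral mu setT (fun x => complex.Im (f x)))%C.

Definition measure_preserving (Tm : T -> T) :=
  measurable_fun setT Tm /\
  forall A, measurable A -> mu (Tm @^-1` A) = mu A.

Definition transfer_op (Tm : T -> T)
    (Rop : (T -> R[i]) -> (T -> R[i])) :=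
  (forall f, cintegrable f -> cintegrable (Rop f)) /\
  (forall f g, cintegrable f -> cmeasurable g ->
     (exists M, forall x, cabs (g x) <= M) ->
     cint (fun x => Rop f x * g x) = cint (fun x => f x * g (Tm x))).

End CMeasure.

Definition slowly_varying {R : realType} (ell : R -> R) :=
  measurable_fun setT ell /\ (forall x, 0 < x -> 0 < ell x) /\
  forall c : R, 0 < c -> ell (c * x) / ell x @[x --> +oo] --> (1 : R).

Definition ellhat {R : realType} (ell : R -> R) (x : R) : R :=
  1 + Rintegral (@lebesgue_measure R) `[1, 1 + x] (fun u => ell u / u).

Definition ell0 {R : realType} (alpha : R) (ell : R -> R) : R -> R :=
  if alpha < 2 then ell else ellhat ell.

Definition H1 {R : realType} {d : measure_display} {T : measurableType d}
    (mu : {measure set T -> \bar R}) (v : T -> R) (alpha : R) (ell : R -> R)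
    (p q : R) :=
  0 <= p /\ 0 <= q /\ p + q = 1 /\
  ((fine (mu [set w | x < v w]) - p * ell x * x `^ (- alpha))
      / (ell x * x `^ (- alpha)) @[x --> +oo] --> (0 : R)) /\
  ((fine (mu [set w | v w <= - x]) - q * ell x * x `^ (- alpha))
      / (ell x * x `^ (- alpha)) @[x --> +oo] --> (0 : R)).

Section Banach.
Context {R : realType} {d : measure_display} {T : measurableType d}.

Notation fn := (T -> R[i]).
Notation op := (fn -> fn).

Definition banach_in_Linfty (mu : {measure set T -> \bar R})
    (B : set fn) (nrm : fn -> R) :=
  (forall f g (c : R[i]), B f -> B g -> B (fun x => c * f x + g x)) /\
  (forall c : R[i], B (fun _ => c)) /\
  (forall f, B f -> 0 <= nrm f) /\
  (forall f, B f -> nrm f = 0 -> f = (fun _ => 0)) /\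
  (forall f g, B f -> B g -> nrm (fun x => f x + g x) <= nrm f + nrm g) /\
  (forall (c : R[i]) f, B f -> nrm (fun x => c * f x) = cabs c * nrm f) /\
  (forall u : nat -> fn, (forall n, B (u n)) ->
     (forall e, 0 < e -> exists N, forall m n, (N <= m)%N -> (N <= n)%N ->
        nrm (fun x => u m x - u n x) < e) ->
     exists f, B f /\ forall e, 0 < e -> exists N, forall n, (N <= n)%N ->
        nrm (fun x => u n x - f x) < e) /\
  (forall f, B f -> cmeasurable f /\ {ae mu, forall x, cabs (f x) <= nrm f}) /\
  (forall f, B f -> {ae mu, forall x, f x = 0} -> f = (fun _ => 0)).

Variables (B : set fn) (nrm : fn -> R).

Definition op_bound (A : op) (c : R) := forall f, B f -> nrm (A f) <= c * nrm f.

Definition bounded_op_on (S : set fn) (A : op) :=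
  (forall f, S f -> S (A f)) /\
  (forall f g (c : R[i]), S f -> S g ->
     A (fun x => c * f x + g x) = (fun x => c * A f x + A g x)) /\
  exists c, forall f, S f -> nrm (A f) <= c * nrm f.

Definition bounded_op := bounded_op_on B.

Definition op_deriv (F : R -> op) (t0 : R) (D : op) :=
  bounded_op D /\
  forall e, 0 < e -> exists del, 0 < del /\
    forall h, 0 < `|h| < del -> forall f, B f ->
      nrm (fun x => F (t0 + h) f x - F t0 f x - (h%:C)%C * D f x)
        <= e * `|h| * nrm f.

Definition in_resolvent (S : set fn) (A : op) (z : R[i]) :=
  exists Sinv : op, bounded_op_on S Sinv /\
    forall f, S f ->
      Sinv (fun x => z * f x - A f x) = f /\
      (fun x => z * Sinv f x - A (Sinv f) x) = f.

Definition spectrum (S : set fn) (A : op) (z : R[i]) := ~ in_resolvent S A z.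

(** lam is a simple isolated eigenvalue of A on B and P is the
    corresponding spectral projection: P is a bounded rank-one projection
    commuting with A, A = lam on range P, and lam is not in the spectrum of
    A restricted to ker P (Riesz decomposition). *)
Definition simple_eig_proj (A : op) (lam : R[i]) (P : op) :=
  bounded_op P /\ (forall f, B f -> P (P f) = P f) /\
  (exists e, B e /\ e <> (fun _ => 0) /\ P e = e /\
     forall f, B f -> exists c : R[i], P f = (fun x => c * e x)) /\
  (forall f, B f -> A (P f) = P (A f)) /\
  (forall f, B f -> A (P f) = (fun x => lam * P f x)) /\
  ~ spectrum [set f | B f /\ P f = (fun _ => 0)] A lam.

End Banach.

Definition Rt {R : realType} {d : measure_display} {T : measurableType d}
    (Rop : (T -> R[i]) -> (T -> R[i])) (v : T -> R) (t : R) :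
    (T -> R[i]) -> (T -> R[i]) :=
  fun f => Rop (fun x => cexpi (t * v x) * f x).

Definition Qt {R : realType} {d : measure_display} {T : measurableType d}
    (Rop : (T -> R[i]) -> (T -> R[i])) (v : T -> R)
    (P : R -> (T -> R[i]) -> (T -> R[i])) (t : R) :
    (T -> R[i]) -> (T -> R[i]) :=
  fun f => Rt Rop v t (fun x => f x - P t f x).

Definition H2 {R : realType} {d : measure_display} {T : measurableType d}
    (B : set (T -> R[i])) (nrm : (T -> R[i]) -> R)
    (Rop : (T -> R[i]) -> (T -> R[i])) (v : T -> R) (alpha : R)
    (ell : R -> R) (R' : R -> (T -> R[i]) -> (T -> R[i])) :=
  forall alpha', 1 < alpha' < alpha ->
  exists eps1 C, 0 < eps1 /\ 0 < C /\
  forall t h, `|t| < eps1 -> `|h| < eps1 ->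
    bounded_op B nrm (Rt Rop v t) /\ op_bound B nrm (Rt Rop v t) C /\
    bounded_op B nrm (R' t) /\ op_bound B nrm (R' t) C /\
    op_deriv B nrm (Rt Rop v) t (R' t) /\
    op_bound B nrm
      (fun f x => Rt Rop v (t + h) f x - Rt Rop v t f x - (h%:C)%C * R' 0 f x)
      (C * `|h| * (`|t| `^ (alpha' - 1) + `|h| `^ (alpha' - 1))) /\
    op_bound B nrm (fun f x => R' (t + h) f x - R' t f x)
      (C * `|h| `^ (alpha - 1) * ell0 alpha ell (`|h|^-1)).

Definition H3 {R : realType} {d : measure_display} {T : measurableType d}
    (B : set (T -> R[i])) (nrm : (T -> R[i]) -> R)
    (Rop : (T -> R[i]) -> (T -> R[i])) :=
  (exists P0, simple_eig_proj B nrm Rop 1 P0) /\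
  exists r : R, 0 <= r < 1 /\
    forall z, spectrum nrm B Rop z -> z <> 1 -> `|z| <= (r%:C)%C.

Definition eig_family {R : realType} {d : measure_display}
    {T : measurableType d}
    (B : set (T -> R[i])) (nrm : (T -> R[i]) -> R)
    (Rop : (T -> R[i]) -> (T -> R[i])) (v : T -> R)
    (lam : R -> R[i]) (P : R -> (T -> R[i]) -> (T -> R[i])) :=
  exists del : R, 0 < del /\ lam 0 = 1 /\
    (forall t, `|t| < del -> simple_eig_proj B nrm (Rt Rop v t) (lam t) (P t)) /\
    (forall t, `|t| < del -> forall e : R, 0 < e -> exists dl : R, 0 < dl /\
       forall s, `|s| < del -> `|s - t| < dl -> cabs (lam s - lam t) < e).

(* Since T preserves mu, the transfer operator R fixes the constant 1 and
   preserves integrals, so the integral vanishes on ker P(0): every element of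
   ker P(0) is of the form (1 - R) g, because 1 - R is invertible there.  The
   same invertibility gives P(0)1 = 1.  Differentiating P(t)^2 = P(t) at 0 and
   applying the result to 1 shows P'(0)1 \in ker P(0).  Since Q(0)1 = 0, the
   product rule gives (Q^n)'(0)1 = Q(0)^(n-1) Q'(0)1 with Q'(0)1 = -R P'(0)1,
   and both R and Q(0) = R(1 - P(0)) map ker P(0), resp. all of B, into
   ker P(0); hence all these integrals vanish. *)

From HB Require Import structures.
From mathcomp Require Import all_boot all_order all_algebra.
From mathcomp Require Import all_classical all_reals all_analysis.
Import Order.TTheory GRing.Theory Num.Theory.
From mathcomp Require Import complex.
Import numFieldNormedType.Exports.
From mathcomp Require Import measurable_realfun.
From mathcomp Require Import ring lra.
Set Implicit Arguments.
Unset Strict Implicit.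
Unset Printing Implicit Defensive.
Local Open Scope ring_scope.
Local Open Scope classical_set_scope.

Section Scalars.
Context {R : realType}.

Lemma cabsE (z : R[i]) : cabs z = Num.sqrt (complex.Re z ^+ 2 + complex.Im z ^+ 2).
Proof. by rewrite /cabs normc_def. Qed.

Lemma cabs_ge0 (z : R[i]) : 0 <= cabs z.
Proof. by rewrite cabsE sqrtr_ge0. Qed.

Lemma cabs_real (r : R) : cabs (r%:C)%C = `|r|.
Proof. by rewrite /cabs normc_def /= expr0n /= addr0 sqrtr_sqr. Qed.

Lemma cabs1 : cabs (1 : R[i]) = 1.
Proof. by rewrite -(rmorph1 (real_complex R)) cabs_real normr1. Qed.

Lemma cabsN1 : cabs (-1 : R[i]) = 1.
Proof. by rewrite -(rmorphN1 (real_complex R)) cabs_real normrN normr1. Qed.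

Lemma Re_le_cabs (z : R[i]) : `|complex.Re z| <= cabs z.
Proof.
by rewrite /cabs normc_def /= -sqrtr_sqr ler_wsqrtr // lerDl sqr_ge0.
Qed.

Lemma Im_le_cabs (z : R[i]) : `|complex.Im z| <= cabs z.
Proof.
by rewrite /cabs normc_def /= -sqrtr_sqr ler_wsqrtr // lerDr sqr_ge0.
Qed.

Lemma cabsMr (z : R[i]) (r : R) : cabs (z * (r%:C)%C) = cabs z * `|r|.
Proof.
case: z => a b; rewrite !cabsE /= !mulr0 subr0 add0r !exprMn -mulrDl.
by rewrite sqrtrM ?sqrtr_sqr // addr_ge0 ?sqr_ge0.
Qed.

Lemma cabsB_le (z w : R[i]) : cabs (z - w) <= cabs z + cabs w.
Proof.
have := ler_normB z w; rewrite lecE => /andP[_].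
by rewrite /cabs; move/le_trans; apply; case: `|z| => a b; case: `|w| => c e.
Qed.

Lemma cexpi0 : cexpi (0 : R) = 1.
Proof. by rewrite /cexpi cos0 sin0. Qed.

Lemma ReB (z w : R[i]) : complex.Re (z - w) = complex.Re z - complex.Re w.
Proof. by case: z; case: w. Qed.

Lemma ImB (z w : R[i]) : complex.Im (z - w) = complex.Im z - complex.Im w.
Proof. by case: z; case: w. Qed.

Lemma ReMr (z : R[i]) (r : R) : complex.Re (z * (r%:C)%C) = complex.Re z * r.
Proof. by case: z => a b /=; rewrite !mulr0 subr0. Qed.

Lemma ImMr (z : R[i]) (r : R) : complex.Im (z * (r%:C)%C) = complex.Im z * r.
Proof. by case: z => a b /=; rewrite !mulr0 add0r. Qed.

Lemma near0_neq0 (P : R -> Prop) :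
  (\forall h \near (0 : R), P h) -> exists2 h, h != 0 & P h.
Proof.
case/nbhs_norm0P => del /= del0 Pdel.
exists (del / 2); first by rewrite gt_eqF ?divr_gt0.
by apply: Pdel; rewrite /= gtr0_norm ?divr_gt0 // ltr_pdivrMr //; lra.
Qed.

Lemma near0_norm_lt (del : R) : 0 < del -> \forall h \near (0 : R), `|h| < del.
Proof. by move=> del0; exists del => // h /=; rewrite sub0r normrN. Qed.

Lemma mul_div_succ_le (e c : R) : 0 <= e -> 0 <= c -> e / (c + 1) * c <= e.
Proof.
by move=> e0 c0; rewrite mulrAC ler_pdivrMr ?ler_wpM2l //; lra.
Qed.

End Scalars.

Section FunctionSpace.
Context {R : realType} {d : measure_display} {T : measurableType d}.
Local Notation fn := (T -> R[i]).
Local Notation op := (fn -> fn).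
Variables (B : set fn) (nrm : fn -> R).
Hypothesis Bcomb : forall f g (c : R[i]), B f -> B g -> B (fun x => c * f x + g x).
Hypothesis Bcst : forall c : R[i], B (fun _ => c).
Hypothesis nrm_ge0 : forall f, B f -> 0 <= nrm f.
Hypothesis nrm_eq0 : forall f, B f -> nrm f = 0 -> f = (fun _ => 0).
Hypothesis nrm_tri : forall f g, B f -> B g ->
  nrm (fun x => f x + g x) <= nrm f + nrm g.
Hypothesis nrm_scale : forall (c : R[i]) f, B f ->
  nrm (fun x => c * f x) = cabs c * nrm f.

Lemma inB0 : B (fun _ => 0). Proof. exact: Bcst. Qed.

Lemma inBD f g : B f -> B g -> B (fun x => f x + g x).
Proof. by move=> Bf Bg; have := Bcomb 1 Bf Bg; under eq_fun do rewrite mul1r. Qed.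

Lemma inBZ c f : B f -> B (fun x => c * f x).
Proof. by move=> Bf; have := Bcomb c Bf inB0; under eq_fun do rewrite addr0. Qed.

Lemma inBN f : B f -> B (fun x => - f x).
Proof. by move=> Bf; have := inBZ (-1) Bf; under eq_fun do rewrite mulN1r. Qed.

Lemma inBB f g : B f -> B g -> B (fun x => f x - g x).
Proof. by move=> Bf Bg; apply: inBD => //; exact: inBN. Qed.

Lemma nrm0 : nrm (fun _ => 0) = 0.
Proof.
have := nrm_scale 0 inB0; under eq_fun do rewrite mul0r.
by rewrite -(rmorph0 (real_complex R)) cabs_real normr0 mul0r.
Qed.

Lemma nrmN f : B f -> nrm (fun x => - f x) = nrm f.
Proof.
move=> Bf; have := nrm_scale (-1) Bf; under eq_fun do rewrite mulN1r.
by rewrite cabsN1 mul1r.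
Qed.

Lemma nrmB_le f g : B f -> B g -> nrm (fun x => f x - g x) <= nrm f + nrm g.
Proof. by move=> Bf Bg; rewrite -(nrmN Bg); apply: nrm_tri => //; exact: inBN. Qed.

Lemma nrmZ_real (h : R) f : B f -> nrm (fun x => (h%:C)%C * f x) = `|h| * nrm f.
Proof. by move=> Bf; rewrite nrm_scale // cabs_real. Qed.

Lemma nrm_eq0_sub f g : B f -> B g -> nrm (fun x => f x - g x) = 0 -> f = g.
Proof.
move=> Bf Bg /(nrm_eq0 (inBB Bf Bg)) fg0; apply/funext => x.
by apply/eqP; rewrite -subr_eq0; apply/eqP; have := congr1 (@^~ x) fg0.
Qed.

Section BoundedOp.
Variable A : op.
Hypothesis bA : bounded_op B nrm A.

Lemma bop_in f : B f -> B (A f). Proof. by case: bA => + _; apply. Qed.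

Lemma bop_bound : exists2 c, 0 <= c & forall f, B f -> nrm (A f) <= c * nrm f.
Proof.
case: bA => _ [_ [c Hc]]; exists `|c| => // f Bf.
by apply: le_trans (Hc _ Bf) _; rewrite ler_wpM2r ?nrm_ge0 ?ler_norm.
Qed.

Lemma bop_lin c f g : B f -> B g ->
  A (fun x => c * f x + g x) = (fun x => c * A f x + A g x).
Proof. by case: bA => _ [+ _]; apply. Qed.

Lemma bop0 : A (fun _ => 0) = (fun _ => 0).
Proof.
have := bop_lin (-1) inB0 inB0; under eq_fun do rewrite mulN1r addNr.
by move=> ->; apply/funext => x; rewrite mulN1r addNr.
Qed.

Lemma bopD f g : B f -> B g -> A (fun x => f x + g x) = (fun x => A f x + A g x).
Proof.
move=> Bf Bg; have := bop_lin 1 Bf Bg; under eq_fun do rewrite mul1r.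
by move=> ->; apply/funext => x; rewrite mul1r.
Qed.

Lemma bopZ c f : B f -> A (fun x => c * f x) = (fun x => c * A f x).
Proof.
move=> Bf; have := bop_lin c Bf inB0; under eq_fun do rewrite addr0.
by move=> ->; rewrite bop0; apply/funext => x; rewrite addr0.
Qed.

Lemma bopN f : B f -> A (fun x => - f x) = (fun x => - A f x).
Proof.
move=> Bf; have := bopZ (-1) Bf; under eq_fun do rewrite mulN1r.
by move=> ->; apply/funext => x; rewrite mulN1r.
Qed.

Lemma bopB f g : B f -> B g -> A (fun x => f x - g x) = (fun x => A f x - A g x).
Proof. by move=> Bf Bg; rewrite bopD ?bopN //; exact: inBN. Qed.

End BoundedOp.

Lemma bounded_op_comp A1 A2 : bounded_op B nrm A1 -> bounded_op B nrm A2 ->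
  bounded_op B nrm (fun f => A1 (A2 f)).
Proof.
move=> b1 b2; have [c1 c10 H1] := bop_bound b1; have [c2 c20 H2] := bop_bound b2.
split=> [f Bf|]; first by do 2 apply: bop_in => //.
split=> [f g c Bf Bg|]; first by rewrite (bop_lin b2) // (bop_lin b1) //; exact: bop_in.
exists (c1 * c2) => f Bf; apply: le_trans (H1 _ (bop_in b2 Bf)) _.
by rewrite -mulrA ler_wpM2l ?H2.
Qed.

Lemma bounded_op_add A1 A2 : bounded_op B nrm A1 -> bounded_op B nrm A2 ->
  bounded_op B nrm (fun f x => A1 f x + A2 f x).
Proof.
move=> b1 b2; have [c1 c10 H1] := bop_bound b1; have [c2 c20 H2] := bop_bound b2.
split=> [f Bf|]; first by apply: inBD; apply: bop_in.
split=> [f g c Bf Bg|].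
  by rewrite (bop_lin b1) // (bop_lin b2) //; apply/funext => x; ring.
exists (c1 + c2) => f Bf; apply: le_trans (nrm_tri (bop_in b1 Bf) (bop_in b2 Bf)) _.
by rewrite mulrDl lerD ?H1 ?H2.
Qed.

Lemma bounded_op_opp A : bounded_op B nrm A -> bounded_op B nrm (fun f x => - A f x).
Proof.
move=> bA; have [c c0 Hc] := bop_bound bA.
split=> [f Bf|]; first by apply: inBN; apply: bop_in.
split=> [f g k Bf Bg|]; first by rewrite (bop_lin bA) //; apply/funext => x; ring.
by exists c => f Bf; rewrite nrmN ?Hc //; exact: bop_in.
Qed.

Lemma bounded_op_id : bounded_op B nrm id.
Proof. by do 2 split => //; exists 1 => f _; rewrite mul1r. Qed.

Lemma bounded_op_zero : bounded_op B nrm (fun f x => 0).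
Proof.
split=> [f _|]; first exact: inB0.
split=> [f g c _ _|]; first by apply/funext => x; rewrite mulr0 addr0.
by exists 0 => f _; rewrite nrm0 mul0r.
Qed.

Lemma bounded_op_subI A : bounded_op B nrm A ->
  bounded_op B nrm (fun f x => f x - A f x).
Proof.
by move=> bA; apply: bounded_op_add; [exact: bounded_op_id | exact: bounded_op_opp].
Qed.

Lemma bounded_op_iter A n : bounded_op B nrm A -> bounded_op B nrm (iter n A).
Proof.
move=> bA; elim: n => [|n IH]; first exact: bounded_op_id.
exact: (bounded_op_comp bA IH).
Qed.

Definition op_littleo (E : R -> op) :=
  forall e, 0 < e -> \forall h \near (0 : R), forall f, B f ->
    B (E h f) /\ nrm (E h f) <= e * `|h| * nrm f.

Definition op_rem (F : R -> op) (D : op) : R -> op :=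
  fun h f x => F h f x - F 0 f x - (h%:C)%C * D f x.

Definition op_bounded_near0 (F : R -> op) :=
  exists2 K, 0 <= K & \forall h \near (0 : R),
    bounded_op B nrm (F h) /\ forall f, B f -> nrm (F h f) <= K * nrm f.

Lemma op_deriv0P (F : R -> op) (D : op) :
  (\forall h \near (0 : R), forall f, B f -> B (F h f)) ->
  op_deriv B nrm F 0 D <-> bounded_op B nrm D /\ op_littleo (op_rem F D).
Proof.
move=> BF; have BF0 := nbhs_singleton BF.
split=> -[bD HD]; split=> // e e0.
- have [del [del0 Hdel]] := HD e e0.
  apply: filterS2 _ _ BF (near0_norm_lt del0) => h BFh hdel f Bf; split.
    by apply: inBB; [apply: inBB; [exact: BFh | exact: BF0] | exact/inBZ/(bop_in bD)].
  have [->|h0] := eqVneq h 0.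
    rewrite /op_rem normr0 !mulr0 mul0r rmorph0.
    by under eq_fun do rewrite mul0r subrr subr0; rewrite nrm0.
  by have := Hdel h _ f Bf; rewrite add0r normr_gt0 h0; apply.
- have [del /= del0 Hdel] := nbhs_norm0P.1 (HD e e0).
  exists del; split=> // h /andP[_ hdel] f Bf; rewrite add0r.
  exact: (Hdel h hdel f Bf).2.
Qed.

Lemma op_littleo_eq_near (E1 E2 : R -> op) :
  (\forall h \near (0 : R), forall f, B f -> E1 h f = E2 h f) ->
  op_littleo E1 -> op_littleo E2.
Proof.
move=> E12 HE e e0; apply: filterS2 _ _ E12 (HE e e0) => h Eh Hh f Bf.
by rewrite -Eh //; exact: Hh.
Qed.

Lemma op_littleoD (E1 E2 : R -> op) : op_littleo E1 -> op_littleo E2 ->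
  op_littleo (fun h f x => E1 h f x + E2 h f x).
Proof.
move=> H1 H2 e e0; have e20 : 0 < e / 2 by rewrite divr_gt0.
apply: filterS2 _ _ (H1 _ e20) (H2 _ e20) => h H1h H2h f Bf.
have [B1 n1] := H1h f Bf; have [B2 n2] := H2h f Bf.
split; first exact: inBD.
by apply: le_trans (nrm_tri B1 B2) _; rewrite [e]splitr !mulrDl lerD.
Qed.

Lemma op_littleoN (E : R -> op) : op_littleo E -> op_littleo (fun h f x => - E h f x).
Proof.
move=> HE e e0; apply: filterS (HE e e0) => h Hh f Bf.
by have [BE nE] := Hh f Bf; rewrite nrmN //; split => //; exact: inBN.
Qed.

Lemma op_littleo_compr (A : op) (E : R -> op) : bounded_op B nrm A -> op_littleo E ->
  op_littleo (fun h f => E h (A f)).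
Proof.
move=> bA HE e e0; have [c c0 Hc] := bop_bound bA.
apply: filterS (HE (e / (c + 1)) _) => [h Hh f Bf|]; last by rewrite divr_gt0 //; lra.
have [BE nE] := Hh _ (bop_in bA Bf); split => //; apply: le_trans nE _.
have ecK0 : 0 <= e / (c + 1) * `|h| by rewrite mulr_ge0 // divr_ge0 ?ltW //; lra.
apply: le_trans (_ : e / (c + 1) * `|h| * (c * nrm f) <= _).
  by rewrite ler_wpM2l ?Hc.
have -> : e / (c + 1) * `|h| * (c * nrm f) = e / (c + 1) * c * `|h| * nrm f by ring.
by rewrite ler_wpM2r ?nrm_ge0 // ler_wpM2r // mul_div_succ_le // ltW.
Qed.

Lemma op_littleo_compl (F E : R -> op) : op_bounded_near0 F -> op_littleo E ->
  op_littleo (fun h f => F h (E h f)).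
Proof.
move=> [K K0 HF] HE e e0.
apply: filterS2 _ _ HF (HE (e / (K + 1)) _) => [h [bFh Hh] HEh f Bf|]; last first.
  by rewrite divr_gt0 //; lra.
have [BE nE] := HEh f Bf; split; first exact: bop_in.
apply: le_trans (Hh _ BE) _; apply: le_trans (ler_wpM2l K0 nE) _.
rewrite !mulrA -(mulrA K) (mulrC K) ler_wpM2r ?nrm_ge0 //.
by rewrite ler_wpM2r ?mul_div_succ_le // ltW.
Qed.

Lemma op_littleo_sqr (E : R -> op) :
  (exists2 K, 0 <= K & \forall h \near (0 : R), forall f, B f ->
    B (E h f) /\ nrm (E h f) <= K * `|h| ^+ 2 * nrm f) ->
  op_littleo E.
Proof.
move=> [K K0 HE] e e0.
have eK0 : 0 < e / (K + 1) by rewrite divr_gt0 //; lra.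
apply: filterS2 _ _ HE (near0_norm_lt eK0) => h Hh hsmall f Bf.
have [BE nE] := Hh f Bf; split => //; apply: le_trans nE _.
rewrite expr2 mulrA ler_wpM2r ?nrm_ge0 // ler_wpM2r //.
apply: le_trans (_ : K * (e / (K + 1)) <= e).
  by rewrite ler_wpM2l // ltW.
by rewrite mulrC mul_div_succ_le // ltW.
Qed.

Lemma op_deriv_lipschitz (F : R -> op) (D : op) :
  (\forall h \near (0 : R), bounded_op B nrm (F h)) -> op_deriv B nrm F 0 D ->
  exists2 K, 0 <= K & \forall h \near (0 : R), forall g, B g ->
    nrm (fun x => F h g x - F 0 g x) <= K * `|h| * nrm g.
Proof.
move=> bF dF; have bF0 := nbhs_singleton bF.
have [bD HD] := (op_deriv0P D (filterS (fun h => @bop_in _) bF)).1 dF.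
have [c c0 Hc] := bop_bound bD.
exists (1 + c); first lra.
apply: filterS2 _ _ bF (HD 1 ltr01) => h bFh Hh g Bg.
have [Brem nrem] := Hh g Bg.
have -> : (fun x => F h g x - F 0 g x) = (fun x => op_rem F D h g x + (h%:C)%C * D g x).
  by apply/funext => x; rewrite /op_rem; ring.
apply: le_trans (nrm_tri Brem (inBZ _ (bop_in bD Bg))) _.
rewrite nrmZ_real; last exact: bop_in.
rewrite !mulrDl lerD // (mulrAC c) [leLHS]mulrC ler_wpM2r //; exact: Hc.
Qed.

Lemma op_deriv_bounded_near0 (F : R -> op) (D : op) :
  (\forall h \near (0 : R), bounded_op B nrm (F h)) -> op_deriv B nrm F 0 D ->
  op_bounded_near0 F.
Proof.
move=> bF dF; have bF0 := nbhs_singleton bF; have [c0 c00 Hc0] := bop_bound bF0.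
have [K K0 HK] := op_deriv_lipschitz bF dF.
exists (c0 + K); first lra.
near=> h.
have bFh : bounded_op B nrm (F h) by near: h.
have HKh : forall g, B g -> nrm (fun x => F h g x - F 0 g x) <= K * `|h| * nrm g.
  by near: h.
have h1 : `|h| < 1 by near: h; exact: near0_norm_lt.
split => // g Bg; have -> : F h g = (fun x => F 0 g x + (F h g x - F 0 g x)).
  by apply/funext => x; ring.
apply: le_trans (nrm_tri (bop_in bF0 Bg) _) _.
  by apply: inBB; [exact: (bop_in bFh) | exact: (bop_in bF0)].
rewrite mulrDl lerD ?Hc0 //; apply: le_trans (HKh _ Bg) _.
by rewrite ler_wpM2r ?nrm_ge0 // -[leRHS]mulr1 ler_wpM2l // ltW.
Unshelve. all: by end_near.
Qed.

Lemma op_deriv_unique (F : R -> op) (D1 D2 : op) :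
  (\forall h \near (0 : R), forall f, B f -> B (F h f)) ->
  op_deriv B nrm F 0 D1 -> op_deriv B nrm F 0 D2 -> forall f, B f -> D1 f = D2 f.
Proof.
move=> BF dF1 dF2 f Bf.
have [bD1 HD1] := (op_deriv0P D1 BF).1 dF1.
have [bD2 HD2] := (op_deriv0P D2 BF).1 dF2.
have BD1 := bop_in bD1 Bf; have BD2 := bop_in bD2 Bf; have nf0 := nrm_ge0 Bf.
apply: nrm_eq0_sub => //; apply/eqP; rewrite eq_le nrm_ge0 ?andbT; last exact: inBB.
apply/ler_addgt0Pr => e e0; rewrite add0r.
have e'0 : 0 < e / (nrm f + 1) / 2 by rewrite !divr_gt0 //; lra.
have [h h0 [H1 H2]] := near0_neq0 (filterI (HD1 _ e'0) (HD2 _ e'0)).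
have [B1 n1] := H1 f Bf; have [B2 n2] := H2 f Bf.
have : `|h| * nrm (fun x => D1 f x - D2 f x) <= `|h| * (e / (nrm f + 1) * nrm f).
  rewrite -nrmZ_real; last exact: inBB.
  have -> : (fun x => (h%:C)%C * (D1 f x - D2 f x)) =
      (fun x => op_rem F D2 h f x - op_rem F D1 h f x).
    by apply/funext => x; rewrite /op_rem; ring.
  apply: le_trans (nrmB_le B2 B1) _; apply: le_trans (lerD n2 n1) _.
  by rewrite -mulrDl -mulrDl -splitr [leRHS]mulrA (mulrC `|h|).
rewrite ler_pM2l ?normr_gt0 // => /le_trans; apply.
by rewrite mul_div_succ_le // ltW.
Qed.

Lemma op_deriv_eq_near (F1 F2 : R -> op) (D : op) :
  (\forall h \near (0 : R), bounded_op B nrm (F1 h) /\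
     forall f, B f -> F1 h f = F2 h f) ->
  op_deriv B nrm F1 0 D -> op_deriv B nrm F2 0 D.
Proof.
move=> HF; have BF1 : \forall h \near (0 : R), forall f, B f -> B (F1 h f).
  by apply: filterS HF => h [bF1 _]; exact: bop_in.
have BF2 : \forall h \near (0 : R), forall f, B f -> B (F2 h f).
  by apply: filterS HF => h [bF1 E] f Bf; rewrite -E //; exact: bop_in.
have [_ E0] := nbhs_singleton HF.
move=> /(op_deriv0P D BF1) [bD H1]; apply/(op_deriv0P D BF2); split => //.
apply: op_littleo_eq_near H1; apply: filterS HF => h [_ E] f Bf.
by rewrite /op_rem E ?E0.
Qed.

Lemma op_deriv_cst (A : op) : op_deriv B nrm (fun=> A) 0 (fun f x => 0).
Proof.
split=> [|e e0]; first exact: bounded_op_zero.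
exists 1; split=> // h _ f Bf.
under eq_fun do rewrite subrr mulr0 subr0.
by rewrite nrm0 !mulr_ge0 ?nrm_ge0 // ltW.
Qed.

Lemma op_deriv_subI (P : R -> op) (DP : op) :
  (\forall h \near (0 : R), bounded_op B nrm (P h)) -> op_deriv B nrm P 0 DP ->
  op_deriv B nrm (fun t f x => f x - P t f x) 0 (fun f x => - DP f x).
Proof.
move=> bP; have BP : \forall h \near (0 : R), forall f, B f -> B (P h f).
  by apply: filterS bP => h; exact: bop_in.
have BIP : \forall h \near (0 : R), forall f, B f -> B (fun x => f x - P h f x).
  by apply: filterS BP => h BPh f Bf; apply: inBB => //; exact: BPh.
move=> /(op_deriv0P DP BP) [bD H]; apply/(op_deriv0P (fun f x => - DP f x) BIP); split.
  exact: bounded_op_opp.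
apply: op_littleo_eq_near (op_littleoN H); near=> h => f _.
by apply/funext => x; rewrite /op_rem; ring.
Unshelve. all: by end_near.
Qed.

Lemma op_littleo_mul_diff (F : R -> op) (DF A : op) :
  (\forall h \near (0 : R), bounded_op B nrm (F h)) -> op_deriv B nrm F 0 DF ->
  bounded_op B nrm A ->
  op_littleo (fun h f x => (h%:C)%C * (F h (A f) x - F 0 (A f) x)).
Proof.
move=> bF dF bA; have bF0 := nbhs_singleton bF.
have [K K0 LF] := op_deriv_lipschitz bF dF; have [c c0 Hc] := bop_bound bA.
apply: op_littleo_sqr; exists (K * c); first exact: mulr_ge0.
near=> h => f Bf.
have bFh : bounded_op B nrm (F h) by near: h.
have LFh : forall g, B g -> nrm (fun x => F h g x - F 0 g x) <= K * `|h| * nrm g.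
  by near: h.
have BAf := bop_in bA Bf.
have BFAf : B (fun x => F h (A f) x - F 0 (A f) x).
  by apply: inBB; [exact: (bop_in bFh) | exact: (bop_in bF0)].
split; first exact: inBZ.
rewrite nrmZ_real //; apply: le_trans (ler_wpM2l (normr_ge0 h) (LFh _ BAf)) _.
rewrite (_ : K * c * `|h| ^+ 2 * nrm f = `|h| * (K * `|h| * (c * nrm f)));
  last by ring.
by rewrite ler_wpM2l // ler_wpM2l ?mulr_ge0 // Hc.
Unshelve. all: by end_near.
Qed.

Lemma op_deriv_comp (F G : R -> op) (DF DG : op) :
  (\forall h \near (0 : R), bounded_op B nrm (F h) /\ bounded_op B nrm (G h)) ->
  op_deriv B nrm F 0 DF -> op_deriv B nrm G 0 DG ->
  op_deriv B nrm (fun t f => F t (G t f)) 0 (fun f x => DF (G 0 f) x + F 0 (DG f) x).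
Proof.
move=> bFG dF dG.
have bF : \forall h \near (0 : R), bounded_op B nrm (F h) by apply: filterS bFG => h [].
have bG : \forall h \near (0 : R), bounded_op B nrm (G h) by apply: filterS bFG => h [].
have bF0 := nbhs_singleton bF; have bG0 := nbhs_singleton bG.
have BF : \forall h \near (0 : R), forall f, B f -> B (F h f).
  by apply: filterS bF => h; exact: bop_in.
have BG : \forall h \near (0 : R), forall f, B f -> B (G h f).
  by apply: filterS bG => h; exact: bop_in.
have BFG : \forall h \near (0 : R), forall f, B f -> B (F h (G h f)).
  by apply: filterS bFG => h [bFh bGh] f Bf; do 2 apply: bop_in => //.
have [bDF rF] := (op_deriv0P DF BF).1 dF.
have [bDG rG] := (op_deriv0P DG BG).1 dG.
apply/(op_deriv0P (fun f x => DF (G 0 f) x + F 0 (DG f) x) BFG); split.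
  by apply: bounded_op_add; apply: bounded_op_comp.
(* The remainder of F G at h splits as
   op_rem F DF h (G 0 f) + F h (op_rem G DG h f) + h (F h - F 0) (DG f). *)
apply: op_littleo_eq_near (op_littleoD (op_littleoD
  (op_littleo_compr bG0 rF) (op_littleo_compl (op_deriv_bounded_near0 bF dF) rG))
  (op_littleo_mul_diff bF dF bDG)).
near=> h => f Bf.
have bFh : bounded_op B nrm (F h) by near: h.
have bGh : bounded_op B nrm (G h) by near: h.
have BGhf := bop_in bGh Bf; have BG0f := bop_in bG0 Bf; have BDGf := bop_in bDG Bf.
rewrite /op_rem (bopB bFh (inBB BGhf BG0f) (inBZ _ BDGf)) (bopB bFh BGhf BG0f).
by rewrite (bopZ bFh _ BDGf); apply/funext => x; ring.
Unshelve. all: by end_near.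
Qed.

(* The derivative at 0 of t |-> Q(t)^n, given Q(0) = Q0 and Q'(0) = DQ. *)
Fixpoint iter_deriv (DQ Q0 : op) (n : nat) : op :=
  if n is n'.+1 then fun f x => DQ (iter n' Q0 f) x + Q0 (iter_deriv DQ Q0 n' f) x
  else fun f x => 0.

Lemma op_deriv_iter (Q : R -> op) (DQ : op) :
  (\forall h \near (0 : R), bounded_op B nrm (Q h)) -> op_deriv B nrm Q 0 DQ ->
  forall n, op_deriv B nrm (fun t => iter n (Q t)) 0 (iter_deriv DQ (Q 0) n).
Proof.
move=> bQ dQ; elim=> [|n IH]; first exact: op_deriv_cst.
apply: (op_deriv_comp _ dQ IH).
by apply: filterS bQ => h bQh; split => //; exact: bounded_op_iter.
Qed.

Lemma op_deriv_idem_range (P : R -> op) (DP : op) :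
  (\forall h \near (0 : R), bounded_op B nrm (P h) /\
     forall f, B f -> P h (P h f) = P h f) ->
  op_deriv B nrm P 0 DP -> forall f, B f -> P 0 f = f -> P 0 (DP f) = (fun _ => 0).
Proof.
move=> bP dP f Bf Pf.
have bPP : \forall h \near (0 : R), bounded_op B nrm (P h) /\ bounded_op B nrm (P h).
  by apply: filterS bP => h [].
have dPP := op_deriv_comp bPP dP dP.
have BP : \forall h \near (0 : R), forall g, B g -> B (P h g).
  by apply: filterS bP => h [bPh _]; exact: bop_in.
have bP_PP : \forall h \near (0 : R),
    bounded_op B nrm (fun g => P h (P h g)) /\ forall g, B g -> P h (P h g) = P h g.
  by apply: filterS bP => h [bPh idem]; split => //; exact: bounded_op_comp.
(* P_t^2 = P_t near 0, so DP = DP P(0) + P(0) DP *)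
have := op_deriv_unique BP dP (op_deriv_eq_near bP_PP dPP) Bf.
rewrite Pf => /(congr1 (fun g => fun x => g x - DP f x)).
by under eq_fun do rewrite subrr; under [RHS]eq_fun do rewrite addrAC subrr add0r.
Qed.

Lemma iter_deriv_vanish (DQ Q0 : op) g : bounded_op B nrm DQ -> bounded_op B nrm Q0 ->
  Q0 g = (fun _ => 0) -> forall n, iter_deriv DQ Q0 n.+1 g = iter n Q0 (DQ g).
Proof.
move=> bDQ bQ0 Qg0; elim=> [|n IH].
  by rewrite /= (bop0 bQ0); apply/funext => x; rewrite addr0.
have iterQg : iter n.+1 Q0 g = (fun _ => 0).
  by rewrite iterSr Qg0; elim: n {IH} => //= n ->; rewrite (bop0 bQ0).
rewrite -[LHS]/(fun x => DQ (iter n.+1 Q0 g) x + Q0 (iter_deriv DQ Q0 n.+1 g) x).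
rewrite iterQg (bop0 bDQ) IH iterS.
by apply/funext => x; rewrite add0r.
Qed.

Definition op_ker (A : op) := [set f | B f /\ A f = (fun _ => 0)].

Section SimpleEigenvalue.
Variables (A P0 : op).
Hypothesis bA : bounded_op B nrm A.
Hypothesis bP0 : bounded_op B nrm P0.
Hypothesis P0_idem : forall f, B f -> P0 (P0 f) = P0 f.
Hypothesis AP0_comm : forall f, B f -> A (P0 f) = P0 (A f).
Hypothesis AP0_id : forall f, B f -> A (P0 f) = (fun x => 1 * P0 f x).
Hypothesis resolvent1 : ~ spectrum nrm (op_ker P0) A 1.

Lemma resolvent1_inv : exists S : op, bounded_op_on nrm (op_ker P0) S /\
  forall f, op_ker P0 f ->
    S (fun x => 1 * f x - A f x) = f /\ (fun x => 1 * S f x - A (S f) x) = f.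
Proof. exact: contrapT resolvent1. Qed.

Lemma op_ker_subI f : B f -> op_ker P0 (fun x => f x - P0 f x).
Proof.
move=> Bf; have BPf := bop_in bP0 Bf; split; first exact: inBB.
by rewrite (bopB bP0 Bf BPf) P0_idem //; apply/funext => x; rewrite subrr.
Qed.

Lemma op_ker_comp_subI f : B f -> op_ker P0 (A (fun x => f x - P0 f x)).
Proof.
move=> Bf; have [Bk Pk] := op_ker_subI Bf.
by split; [exact: bop_in | rewrite -AP0_comm // Pk bop0].
Qed.

(* f - P0 f is a fixed point of A in ker P0, where 1 - A is invertible. *)
Lemma fixed_in_range f : B f -> A f = f -> P0 f = f.
Proof.
move=> Bf Af; have [S [[_ [S_lin _]] HS]] := resolvent1_inv.
have ker0 : op_ker P0 (fun _ => 0) by split; [exact: inB0 | exact: bop0].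
have S0 : S (fun _ => 0) = (fun _ => 0).
  have := S_lin _ _ (-1) ker0 ker0; under eq_fun do rewrite mulr0 addr0.
  by move=> ->; apply/funext => x; rewrite mulN1r addNr.
have [Bk Pk] := op_ker_subI Bf; have BPf := bop_in bP0 Bf.
have Ak : A (fun x => f x - P0 f x) = (fun x => f x - P0 f x).
  by rewrite (bopB bA Bf BPf) Af AP0_id //; under eq_fun do rewrite mul1r.
have [+ _] := HS _ (op_ker_subI Bf); rewrite Ak.
under eq_fun do rewrite mul1r subrr; rewrite S0 => k0.
apply/funext => x; apply/eqP; rewrite eq_sym -subr_eq0; apply/eqP.
by rewrite -(congr1 (@^~ x) k0).
Qed.

Lemma invariant_functional_ker (m : fn -> R[i]) :
  (forall f g, B f -> B g -> m (fun x => f x - g x) = m f - m g) ->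
  (forall f, B f -> m (A f) = m f) ->
  forall f, op_ker P0 f -> m f = 0.
Proof.
move=> m_lin m_inv f kerf; have [S [[S_ker _] HS]] := resolvent1_inv.
have [BSf _] := S_ker f kerf; have [_ <-] := HS f kerf.
under eq_fun do rewrite mul1r.
by rewrite m_lin ?m_inv ?subrr //; exact: bop_in.
Qed.

End SimpleEigenvalue.

Definition proj_family (Rf P : R -> op) : R -> op :=
  fun t f => Rf t (fun x => f x - P t f x).

Section ProjectedFamily.
Variables (Rf P : R -> op) (DR DP : op).
Hypothesis bRf : \forall h \near (0 : R), bounded_op B nrm (Rf h).
Hypothesis bP : \forall h \near (0 : R), bounded_op B nrm (P h) /\
  forall f, B f -> P h (P h f) = P h f.
Hypothesis dR : op_deriv B nrm Rf 0 DR.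
Hypothesis dP : op_deriv B nrm P 0 DP.
Hypothesis RP0_comm : forall f, B f -> Rf 0 (P 0 f) = P 0 (Rf 0 f).
Hypothesis P0_one : P 0 (fun _ => 1) = (fun _ => 1).

Local Notation Q := (proj_family Rf P).
Local Notation DQ :=
  (fun f x => DR (fun y => f y - P 0 f y) x + Rf 0 (fun y => - DP f y) x).

Let bR0 := nbhs_singleton bRf.
Let bP0 := (nbhs_singleton bP).1.
Let P0_idem := (nbhs_singleton bP).2.

Lemma bounded_proj_family_near0 : \forall h \near (0 : R), bounded_op B nrm (Q h).
Proof.
by apply: filterS2 _ _ bRf bP => h bRh [bPh _]; exact/bounded_op_comp/bounded_op_subI.
Qed.

Lemma op_deriv_proj_family : op_deriv B nrm Q 0 DQ.
Proof.
have bP' : \forall h \near (0 : R), bounded_op B nrm (P h) by apply: filterS bP => h [].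
apply: op_deriv_comp _ dR (op_deriv_subI bP' dP).
by apply: filterS2 _ _ bRf bP' => h bRh bPh; split => //; exact: bounded_op_subI.
Qed.

Lemma proj_family0_one : Q 0 (fun _ => 1) = (fun _ => 0).
Proof. by rewrite /proj_family P0_one; under eq_fun do rewrite subrr; exact: bop0. Qed.

Lemma deriv_proj_family_one_ker : op_ker (P 0) (DQ (fun _ => 1)).
Proof.
have [bDR _] := dR; have [bDP _] := dP; have BDP1 := bop_in bDP (Bcst 1).
have DR1 : DR (fun y => 1 - P 0 (fun _ => 1) y) = (fun _ => 0).
  by rewrite P0_one -(bop0 bDR); congr DR; apply/funext => y; rewrite subrr.
have -> : DQ (fun _ => 1) = Rf 0 (fun y => - DP (fun _ => 1) y).
  by apply/funext => x; rewrite DR1 add0r.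
split; first by apply: bop_in => //; exact: inBN.
rewrite -RP0_comm; last exact: inBN.
rewrite (bopN bP0 BDP1) (op_deriv_idem_range bP dP (Bcst 1) P0_one).
by under eq_fun do rewrite oppr0; exact: bop0.
Qed.

Lemma iter_proj_family0_ker n : op_ker (P 0) (iter n (Q 0) (DQ (fun _ => 1))).
Proof.
case: n => [|n]; first exact: deriv_proj_family_one_ker.
rewrite iterS /proj_family; apply: (op_ker_comp_subI bR0 bP0 P0_idem RP0_comm).
apply: bop_in deriv_proj_family_one_ker.1.
exact: bounded_op_iter (bounded_op_comp bR0 (bounded_op_subI bP0)).
Qed.

End ProjectedFamily.

Lemma integral_deriv_proj_family (Rf P : R -> op) (DR : op) (m : fn -> R[i]) :
  (\forall h \near (0 : R), bounded_op B nrm (Rf h)) ->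
  (\forall h \near (0 : R), bounded_op B nrm (P h) /\
     forall f, B f -> P h (P h f) = P h f) ->
  op_deriv B nrm Rf 0 DR ->
  (forall f, B f -> Rf 0 (P 0 f) = P 0 (Rf 0 f)) ->
  (forall f, B f -> Rf 0 (P 0 f) = (fun x => 1 * P 0 f x)) ->
  ~ spectrum nrm (op_ker (P 0)) (Rf 0) 1 ->
  Rf 0 (fun _ => 1) = (fun _ => 1) ->
  (forall f g, B f -> B g -> m (fun x => f x - g x) = m f - m g) ->
  (forall f, B f -> m (Rf 0 f) = m f) ->
  (exists DP, op_deriv B nrm P 0 DP) ->
  let Q := proj_family Rf P in
  (forall DP, op_deriv B nrm P 0 DP -> m (DP (fun _ => 1)) = 0) /\
  (forall n : nat, (1 <= n)%N ->
     (exists DQ, op_deriv B nrm Q 0 DQ) /\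
     (exists Dn, op_deriv B nrm (fun t => iter n (Q t)) 0 Dn) /\
     (forall DQ Dn, op_deriv B nrm Q 0 DQ ->
        op_deriv B nrm (fun t => iter n (Q t)) 0 Dn ->
        m (Dn (fun _ => 1)) = m (iter n.-1 (Q 0) (DQ (fun _ => 1))) /\
        m (iter n.-1 (Q 0) (DQ (fun _ => 1))) = 0)).
Proof.
move=> bRf bP dR comm eigen res R0_one m_lin m_inv [DP dP] Q.
have bR0 := nbhs_singleton bRf; have [bP0 P0_idem] := nbhs_singleton bP.
have P0_one : P 0 (fun _ => 1) = (fun _ => 1).
  exact: (fixed_in_range bR0 bP0 P0_idem eigen res (Bcst 1)).
have m_ker := invariant_functional_ker bR0 res m_lin m_inv.
have bQ := bounded_proj_family_near0 bRf bP.
have dQ := op_deriv_proj_family bRf bP dR dP.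
have BQ : \forall h \near (0 : R), forall f, B f -> B (Q h f).
  by apply: filterS bQ => h; exact: bop_in.
split=> [DP' dP'|[//|n] _].
  apply: m_ker; split; first by have [bD _] := dP'; exact: bop_in (Bcst 1).
  exact: (op_deriv_idem_range bP dP' (Bcst 1) P0_one).
have dQn := op_deriv_iter bQ dQ n.+1.
split; first by eexists; exact: dQ.
split; first by eexists; exact: dQn.
move=> DQ Dn dQ' dQn'.
have BQn : \forall h \near (0 : R), forall f, B f -> B (iter n.+1 (Q h) f).
  by apply: filterS bQ => h bQh; exact/bop_in/bounded_op_iter.
rewrite (op_deriv_unique BQn dQn' dQn (Bcst 1)) (op_deriv_unique BQ dQ' dQ (Bcst 1)).
have [bDQ _] := dQ.
rewrite (iter_deriv_vanish bDQ (nbhs_singleton bQ) (proj_family0_one bRf P0_one)).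
by split => //; apply: m_ker; exact: (iter_proj_family0_ker bRf bP dR dP comm P0_one n).
Qed.

End FunctionSpace.

(* transfer_op only accepts test functions bounded everywhere, whereas elements
   of B are only bounded a.e.; clamp1 \o w is such a test function, and
   w * clamp1 w is nonnegative and vanishes exactly where w does. *)
Definition clamp1 {R : realType} (y : R) : R := Num.min (Num.max y (-1)) 1.

Section Clamp.
Context {R : realType}.
Implicit Types y : R.

Lemma clamp1_cases y :
  [\/ y <= -1 /\ clamp1 y = -1, -1 <= y <= 1 /\ clamp1 y = y | 1 <= y /\ clamp1 y = 1].
Proof.
rewrite /clamp1 maxEle; case: (leP y (-1)) => h1; rewrite minEle.
  by rewrite ifT; [constructor 1 | lra].
case: (leP y 1) => h2.
  by constructor 2; split => //; apply/andP; split => //; exact: ltW.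
by constructor 3; split => //; exact: ltW.
Qed.

Lemma clamp1_mul_ge0 y : 0 <= y * clamp1 y.
Proof. by case: (clamp1_cases y) => -[+ ->]; nra. Qed.

Lemma clamp1_mul_eq0 y : y * clamp1 y = 0 -> y = 0.
Proof. by case: (clamp1_cases y) => -[+ ->]; nra. Qed.

Lemma norm_clamp1_le1 y : `|clamp1 y| <= 1.
Proof.
by case: (clamp1_cases y) => -[+ ->]; rewrite ?normrN ?normr1 // ler_norml; lra.
Qed.

Lemma measurable_clamp1 d (T : measurableType d) (w : T -> R) :
  measurable_fun setT w -> measurable_fun setT (fun x => clamp1 (w x)).
Proof.
move=> mw; apply: measurable_minr; last exact: measurable_cst.
by apply: measurable_maxr => //; exact: measurable_cst.
Qed.

End Clamp.

Section FiniteMeasure.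
Context {R : realType} {d : measure_display} {T : measurableType d}.
Variable mu : {finite_measure set T -> \bar R}.

Lemma integrable_ae_bounded (g : T -> R) (M : R) : measurable_fun setT g ->
  {ae mu, forall x, `|g x| <= M} -> mu.-integrable setT (EFin \o g).
Proof.
move=> mg gM; apply/integrableP; split; first exact/measurable_EFinP.
apply: (@le_lt_trans _ _ (\int[mu]_(x in setT) (cst (Num.max M 0)%:E) x)%E).
  apply: ae_ge0_le_integral => //.
  - by apply: measurableT_comp => //; exact/measurable_EFinP.
  - by move=> x _ /=; rewrite lee_fin le_max lexx orbT.
  - by apply: filterS gM => x gx _ /=; rewrite lee_fin le_max gx.
rewrite integral_cst // lte_mul_pinfty ?lee_fin ?le_max ?lexx ?orbT //.
by rewrite ltey_eq fin_num_measure.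
Qed.

Lemma cintegrable_ae_bounded (f : T -> R[i]) (M : R) : cmeasurable f ->
  {ae mu, forall x, cabs (f x) <= M} -> cintegrable mu f.
Proof.
move=> [mRe mIm] fM; split; apply: (integrable_ae_bounded (M := M)) => //;
  apply: filterS fM => x /(le_trans _); apply; [exact: Re_le_cabs | exact: Im_le_cabs].
Qed.

Lemma cintB (f g : T -> R[i]) : cintegrable mu f -> cintegrable mu g ->
  cint mu (fun x => f x - g x) = cint mu f - cint mu g.
Proof.
move=> [fRe fIm] [gRe gIm]; rewrite /cint.
under eq_Rintegral do rewrite ReB.
under [X in (_ +i* X)%C]eq_Rintegral do rewrite ImB.
by rewrite !RintegralB.
Qed.

Lemma Rintegral_comp_measure_preserving (Tm : T -> T) (k : T -> R) (M : R) :
  measure_preserving mu Tm -> measurable_fun setT k -> (forall x, `|k x| <= M) ->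
  Rintegral mu setT (fun x => k (Tm x)) = Rintegral mu setT k.
Proof.
move=> [mT hT] mk kM; rewrite /Rintegral; congr fine.
have mf : measurable_fun setT (EFin \o k) by exact/measurable_EFinP.
have intf : mu.-integrable (Tm @^-1` setT) ((EFin \o k) \o Tm).
  rewrite preimage_setT; apply: (integrable_ae_bounded (M := M)).
    exact: measurableT_comp.
  by apply: aeW => x; exact: kM.
have := integral_pushforward mT mf intf measurableT; rewrite preimage_setT => <-.
by apply: eq_measure_integral => A mA _ /=; rewrite /pushforward hT.
Qed.

Lemma ae_eq0_clamp1 (w : T -> R) (M : R) : measurable_fun setT w ->
  {ae mu, forall x, `|w x| <= M} ->
  Rintegral mu setT (fun x => w x * clamp1 (w x)) = 0 -> {ae mu, forall x, w x = 0}.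
Proof.
move=> mw wM int0; set g := fun x => w x * clamp1 (w x).
have mg : measurable_fun setT g.
  by apply: measurable_funM => //; exact: measurable_clamp1.
have ig : mu.-integrable setT (EFin \o g).
  apply: (integrable_ae_bounded (M := M)) => //; apply: filterS wM => x wx.
  rewrite normrM; apply: le_trans wx; rewrite -[leRHS]mulr1.
  by rewrite ler_wpM2l ?norm_clamp1_le1.
have mEg : measurable_fun setT (EFin \o g) by exact/measurable_EFinP.
have : (\int[mu]_(x in setT) `|(EFin \o g) x| = 0)%E.
  transitivity (\int[mu]_(x in setT) (EFin \o g) x)%E.
    by apply: eq_integral => x _ /=; rewrite ger0_norm // clamp1_mul_ge0.
  by rewrite -(fineK (integrable_fin_num measurableT ig)); congr EFin; exact: int0.
move=> /(ae_eq_integral_abs mu measurableT mEg).1.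
by apply: filterS => x /(_ I) [] /clamp1_mul_eq0.
Qed.

Lemma ae_eq0_of_orthogonal (w : T -> R[i]) (M : R) : cmeasurable w ->
  {ae mu, forall x, cabs (w x) <= M} ->
  (forall k : T -> R, measurable_fun setT k -> (forall x, `|k x| <= 1) ->
     cint mu (fun x => w x * ((k x)%:C)%C) = 0) ->
  {ae mu, forall x, w x = 0}.
Proof.
move=> [mRe mIm] wM orth.
have ReM : {ae mu, forall x, `|complex.Re (w x)| <= M}.
  by apply: filterS wM => x /(le_trans _); apply; exact: Re_le_cabs.
have ImM : {ae mu, forall x, `|complex.Im (w x)| <= M}.
  by apply: filterS wM => x /(le_trans _); apply; exact: Im_le_cabs.
have Re0 : {ae mu, forall x, complex.Re (w x) = 0}.
  apply: (ae_eq0_clamp1 mRe ReM).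
  have := congr1 (@complex.Re R)
    (orth _ (measurable_clamp1 mRe) (fun x => norm_clamp1_le1 _)).
  by rewrite /cint /=; under eq_Rintegral do rewrite ReMr.
have Im0 : {ae mu, forall x, complex.Im (w x) = 0}.
  apply: (ae_eq0_clamp1 mIm ImM).
  have := congr1 (@complex.Im R)
    (orth _ (measurable_clamp1 mIm) (fun x => norm_clamp1_le1 _)).
  by rewrite /cint /=; under [X in (X = _) -> _]eq_Rintegral do rewrite ImMr.
by apply: filterS2 _ _ Re0 Im0 => x; case: (w x) => a b /= -> ->.
Qed.

Lemma cmeasurableMr (f : T -> R[i]) (k : T -> R) : cmeasurable f ->
  measurable_fun setT k -> cmeasurable (fun x => f x * ((k x)%:C)%C).
Proof.
move=> [mRe mIm] mk; split.
  by under eq_fun do rewrite ReMr; exact: measurable_funM.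
by under eq_fun do rewrite ImMr; exact: measurable_funM.
Qed.

Lemma transfer_op_cint (Tm : T -> T) (Rop : (T -> R[i]) -> (T -> R[i])) f :
  transfer_op mu Tm Rop -> cintegrable mu f -> cint mu (Rop f) = cint mu f.
Proof.
move=> [_ transfer] intf.
transitivity (cint mu (fun x => Rop f x * 1)); first by under eq_fun do rewrite mulr1.
rewrite transfer //; last by exists 1 => x; rewrite cabs1.
by under eq_fun do rewrite mulr1.
Qed.

Lemma transfer_op_one_ae (Tm : T -> T) (Rop : (T -> R[i]) -> (T -> R[i])) (M : R) :
  measure_preserving mu Tm -> transfer_op mu Tm Rop ->
  cmeasurable (Rop (fun _ => 1)) -> {ae mu, forall x, cabs (Rop (fun _ => 1) x) <= M} ->
  {ae mu, forall x, Rop (fun _ => 1) x = 1}.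
Proof.
move=> mp [_ transfer] mu1 u1M; set u := Rop (fun _ => 1).
have c1 : cmeasurable (fun _ : T => (1 : R[i])) by split; exact: measurable_cst.
have i1 : cintegrable mu (fun _ : T => (1 : R[i])).
  by apply: (cintegrable_ae_bounded c1); apply: aeW => x; rewrite cabs1.
(* int (u - 1) k = int k o Tm - int k = 0 for every bounded real k *)
have orth (k : T -> R) : measurable_fun setT k -> (forall x, `|k x| <= 1) ->
    cint mu (fun x => (u x - 1) * ((k x)%:C)%C) = 0.
  move=> mk k1.
  have ck : cmeasurable (fun x => ((k x)%:C)%C).
    by split; [exact: mk | exact: measurable_cst].
  have k_ae : {ae mu, forall x, cabs ((k x)%:C)%C <= 1}.
    by apply: aeW => x; rewrite cabs_real.
  have iuk : cintegrable mu (fun x => u x * ((k x)%:C)%C).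
    apply: (cintegrable_ae_bounded (M := M) (cmeasurableMr mu1 mk)).
    by apply: filterS u1M => x ux; rewrite cabsMr -[leRHS]mulr1 ler_pM ?cabs_ge0.
  under eq_fun do rewrite mulrBl mul1r.
  rewrite cintB //; last exact: (cintegrable_ae_bounded ck k_ae).
  rewrite (transfer _ _ i1 ck); last by exists 1 => x; rewrite cabs_real.
  apply/eqP; rewrite subr_eq0; apply/eqP; rewrite /cint; congr (_ +i* _)%C.
    under eq_Rintegral do rewrite mul1r /=.
    exact: Rintegral_comp_measure_preserving mp mk k1.
  by under eq_Rintegral do rewrite mul1r /=.
have mw : cmeasurable (fun x => u x - 1).
  case: mu1 => mRe mIm; split.
    by under eq_fun do rewrite ReB; exact: measurable_funB.
  by under eq_fun do rewrite ImB; exact: measurable_funB.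
have w_ae : {ae mu, forall x, cabs (u x - 1) <= M + 1}.
  by apply: filterS u1M => x ux; apply: le_trans (cabsB_le _ _) _; rewrite cabs1 lerD.
apply: filterS (ae_eq0_of_orthogonal mw w_ae orth) => x /eqP.
by rewrite subr_eq0 => /eqP.
Qed.

End FiniteMeasure.

Section Hypotheses.
Context {R : realType} {d : measure_display} {T : measurableType d}.
Variables (B : set (T -> R[i])) (nrm : (T -> R[i]) -> R).
Variables (Rop : (T -> R[i]) -> (T -> R[i])) (v : T -> R).

Lemma H2_deriv_near0 (alpha : R) (ell : R -> R) (R' : R -> (T -> R[i]) -> (T -> R[i])) :
  1 < alpha -> H2 B nrm Rop v alpha ell R' ->
  (\forall h \near (0 : R), bounded_op B nrm (Rt Rop v h)) /\
  op_deriv B nrm (Rt Rop v) 0 (R' 0).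
Proof.
move=> alpha_gt1 hH2.
(* Any alpha' in (1, alpha) will do: only the boundedness and the
   differentiability parts of (H2) are used. *)
have [eps [C [eps0 [_ H2t]]]] : exists eps C, 0 < eps /\ 0 < C /\ _ :=
  hH2 ((1 + alpha) / 2) ltac:(apply/andP; split; lra).
have eps_0 : `|0 : R| < eps by rewrite normr0.
split; last by have [_ [_ [_ [_ []]]]] := H2t 0 0 eps_0 eps_0.
by apply: filterS (near0_norm_lt eps0) => h ht; have [] := H2t h 0 ht eps_0.
Qed.

Lemma eig_family_near0 (lam : R -> R[i]) (P : R -> (T -> R[i]) -> (T -> R[i])) :
  eig_family B nrm Rop v lam P ->
  (\forall h \near (0 : R), bounded_op B nrm (P h) /\
     forall f, B f -> P h (P h f) = P h f) /\
  simple_eig_proj B nrm (Rt Rop v 0) 1 (P 0).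
Proof.
move=> [del [del0 [lam0 [eigP _]]]]; rewrite -lam0; split; last first.
  by apply: eigP; rewrite normr0.
by apply: filterS (near0_norm_lt del0) => h /eigP [bPh [idem _]].
Qed.

End Hypotheses.

Lemma Rt_0 {R : realType} {d : measure_display} {T : measurableType d}
    (Rop : (T -> R[i]) -> (T -> R[i])) (v : T -> R) : Rt Rop v 0 = Rop.
Proof.
apply/funext => f; rewrite /Rt; congr Rop; apply/funext => x.
by rewrite mul0r cexpi0 mul1r.
Qed.

Theorem lemma3p9 (R : realType) (d : measure_display) (Omega : measurableType d)
    (mu : probability Omega R) (Tm : Omega -> Omega) (v : Omega -> R)
    (alpha : R) (ell : R -> R) (p q : R)
    (B : set (Omega -> R[i])) (nrm : (Omega -> R[i]) -> R)
    (Rop : (Omega -> R[i]) -> (Omega -> R[i]))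
    (R' : R -> (Omega -> R[i]) -> (Omega -> R[i]))
    (lam : R -> R[i]) (P : R -> (Omega -> R[i]) -> (Omega -> R[i])) :
  measure_preserving mu Tm ->
  measurable_fun setT v ->
  (\int[mu]_x ((v x) ^+ 2)%:E = +oo)%E ->
  mu.-integrable setT (fun x => (v x)%:E) ->
  Rintegral mu setT v = 0 ->
  1 < alpha <= 2 ->
  slowly_varying ell ->
  H1 mu v alpha ell p q ->
  transfer_op mu Tm Rop ->
  banach_in_Linfty mu B nrm ->
  H2 B nrm Rop v alpha ell R' ->
  H3 B nrm Rop ->
  eig_family B nrm Rop v lam P ->
  (exists DP, op_deriv B nrm P 0 DP) ->
  (forall DP, op_deriv B nrm P 0 DP -> cint mu (DP (fun _ => 1)) = 0) /\
  (forall n : nat, (1 <= n)%N ->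
     (exists DQ, op_deriv B nrm (Qt Rop v P) 0 DQ) /\
     (exists Dn, op_deriv B nrm (fun t => iter n (Qt Rop v P t)) 0 Dn) /\
     (forall DQ Dn, op_deriv B nrm (Qt Rop v P) 0 DQ ->
        op_deriv B nrm (fun t => iter n (Qt Rop v P t)) 0 Dn ->
        cint mu (Dn (fun _ => 1))
          = cint mu (iter n.-1 (Qt Rop v P 0) (DQ (fun _ => 1))) /\
        cint mu (iter n.-1 (Qt Rop v P 0) (DQ (fun _ => 1))) = 0)).
Proof.
move=> mp _ _ _ _ /andP[alpha_gt1 _] _ _ tr hB hH2 _ eig exDP.
have [bRt dRt] := H2_deriv_near0 alpha_gt1 hH2.
have [bP [_ [_ [_ [comm [eigen res]]]]]] := eig_family_near0 eig.
case: hB => Bcomb [Bcst [nrm_ge0 [nrm_eq0 [nrm_tri [nrm_scale [_ [B_Linfty B_ae0]]]]]]].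
have cintegrable_B f : B f -> cintegrable mu f.
  by move=> /B_Linfty [cf af]; exact: cintegrable_ae_bounded cf af.
have Bu : B (Rop (fun _ => 1)).
  by have := bop_in (nbhs_singleton bRt) (Bcst 1); rewrite Rt_0.
have R_one : Rt Rop v 0 (fun _ => 1) = (fun _ => 1).
  rewrite Rt_0; have [mu1 u1M] := B_Linfty _ Bu.
  apply: (nrm_eq0_sub Bcomb Bcst nrm_eq0 Bu (Bcst 1)).
  rewrite (B_ae0 _ (inBB Bcomb Bcst Bu (Bcst 1))) ?(nrm0 Bcst nrm_scale) //.
  by apply: filterS (transfer_op_one_ae mp tr mu1 u1M) => x ->; rewrite subrr.
apply: (integral_deriv_proj_family Bcomb Bcst nrm_ge0 nrm_eq0 nrm_tri nrm_scale
  bRt bP dRt comm eigen res R_one _ _ exDP) => [f g Bf Bg | f Bf].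
  by apply: cintB; exact: cintegrable_B.
by rewrite Rt_0; apply: transfer_op_cint tr _; exact: cintegrable_B.
Qed.
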